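(* Let $G$ be a finite simple graph on $[d]$. Then the Hilbert polynomial of $R[G]/K_G$ is the constant $2^d$; that is, $H(R[G]/K_G,k)=2^d$ for all sufficiently large $k$.
   Context: A stable set of $G$ is a subset of $[d]$ with no edge of $G$ (including $\emptyset$ and singletons); $S(G)$ is the set of stable sets; $R[G]=\mathbb{K}[x_S : S\in S(G)]$ over a field $\mathbb{K}$, all variables of degree $1$. $J_G$ is the ideal generated by all $x_{S_1}x_{S_2}-x_{S_3}x_{S_4}$ with $S_i\in S(G)$, $S_1\cap S_2=S_3\cap S_4=\emptyset$, $S_1\cup S_2=S_3\cup S_4$; $M_G=\langle x_Sx_T : S,T\in S(G),\ S\cap T\neq\emptyset\rangle$; $K_G=J_G+M_G$. $H(R[G]/K_G,k)=\dim_{\mathbb{K}}$ of the degree-$k$ part of $R[G]/K_G$; the Hilbert polynomial is the unique polynomial $P\in\mathbb{Q}[k]$ with $H(R[G]/K_G,k)=P(k)$ for all large $k$. *)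

From HB Require Import structures.
From mathcomp Require Import all_boot all_order all_algebra.
From mathcomp.multinomials Require Import mpoly.
Set Implicit Arguments. Unset Strict Implicit. Unset Printing Implicit Defensive.
Import GRing.Theory.
Local Open Scope ring_scope.

Definition simple_graph (d : nat) (e : rel 'I_d) : Prop :=
  ssrbool.symmetric e /\ ssrbool.irreflexive e.

Definition stableb (d : nat) (e : rel 'I_d) (S : {set 'I_d}) : bool :=
  [forall x in S, forall y in S, ~~ e x y].

Definition stab (d : nat) (e : rel 'I_d) : finType :=
  {S : {set 'I_d} | stableb e S}.

Definition nvars (d : nat) (e : rel 'I_d) : nat := #|{: stab e}|.

(* R[G] = K[x_S : S in S(G)] *)
Definition RG (K : fieldType) (d : nat) (e : rel 'I_d) : Type :=
  {mpoly K[nvars e]}.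

Definition xS (K : fieldType) (d : nat) (e : rel 'I_d) (S : stab e)
  : {mpoly K[nvars e]} := 'X_(enum_rank S).

(* generators of K_G = J_G + M_G *)
Definition KG_gen (K : fieldType) (d : nat) (e : rel 'I_d)
    (p : {mpoly K[nvars e]}) : Prop :=
  (exists S1 S2 S3 S4 : stab e,
      [/\ val S1 :&: val S2 = set0, val S3 :&: val S4 = set0,
          val S1 :|: val S2 = val S3 :|: val S4 &
          p = xS K S1 * xS K S2 - xS K S3 * xS K S4])
  \/
  (exists S T : stab e,
      val S :&: val T != set0 /\ p = xS K S * xS K T).

Definition in_KG (K : fieldType) (d : nat) (e : rel 'I_d)
    (p : {mpoly K[nvars e]}) : Prop :=
  exists s : seq ({mpoly K[nvars e]} * {mpoly K[nvars e]}),
    (forall c, c \in s -> KG_gen c.2) /\ p = \sum_(c <- s) c.1 * c.2.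

(* homogeneous of degree k (all variables of degree 1); 0 is homogeneous *)
Definition homog_deg (n : nat) (K : fieldType) (k : nat) (p : {mpoly K[n]}) : bool :=
  all [pred m | mdeg m == k] (msupp p).

Definition indep_mod_KG (K : fieldType) (d : nat) (e : rel 'I_d) (m : nat)
    (f : 'I_m -> {mpoly K[nvars e]}) : Prop :=
  forall c : 'I_m -> K, in_KG (\sum_(i < m) c i *: f i) -> forall i, c i = 0.

(* H(R[G]/K_G, k) = h : the degree-k part of R[G]/K_G (spanned by the images
   of the degree-k homogeneous polynomials) has K-dimension exactly h. *)
Definition hilb_fun_eq (K : fieldType) (d : nat) (e : rel 'I_d) (k h : nat) : Prop :=
  (exists f : 'I_h -> {mpoly K[nvars e]},
      (forall i, homog_deg k (f i)) /\ indep_mod_KG f)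
  /\
  (forall f : 'I_h.+1 -> {mpoly K[nvars e]},
      (forall i, homog_deg k (f i)) -> ~ indep_mod_KG f).

(* For k ≥ d the degree-k part of R[G]/K_G has as a basis the standard monomials
   x_∅^(k - |U|) ∏_(x ∈ U) x_{x}, one for each U ⊆ [d].
   Independence: for each U, summing the coefficients of the degree-k monomials
   whose factors cover every vertex of U exactly once and no other vertex gives a
   linear form vanishing on K_G, since both terms of a binomial generator have
   the same cover and a product x_S x_T with S ∩ T ≠ ∅ covers a vertex twice.
   Spanning: a monomial covering some vertex twice lies in M_G.  Otherwise, while
   it has a factor x_S with |S| ≥ 2, the degree k ≥ d forces a factor x_∅, and
   the relation x_S x_∅ = x_{s} x_(S ∖ s) of J_G removes it. *)

From mathcomp Require Import all_boot all_order all_algebra.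
From mathcomp.multinomials Require Import mpoly.
Set Implicit Arguments. Unset Strict Implicit. Unset Printing Implicit Defensive.
Import GRing.Theory.
Local Open Scope ring_scope.

Lemma nonzero_left_kernel (K : fieldType) m n (A : 'M[K]_(m, n)) :
  (n < m)%N -> exists2 v : 'rV_m, v != 0 & v *m A = 0.
Proof.
move=> lt_nm; have /rowV0Pn [v /sub_kermxP vA v_neq0] : kermx A != 0.
  by rewrite -mxrank_eq0 mxrank_ker subn_eq0 -ltnNge (leq_ltn_trans (rank_leq_col A)).
by exists v.
Qed.

Lemma card_set_type (T : finType) : #|{set T}| = (2 ^ #|T|)%N.
Proof.
rewrite -cardsT -card_powerset; apply: eq_card => A.
by rewrite !inE subsetT.
Qed.

Lemma mnm_sub1K n (m : 'X_{1..n}) i : (0 < m i)%N -> (m - U_(i) + U_(i))%MM = m.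
Proof. by move=> mi_pos; rewrite submK // lep1mP -lt0n. Qed.

Section KGIdeal.
Variables (K : fieldType) (d : nat) (e : rel 'I_d).
Local Notation P := {mpoly K[nvars e]}.

Lemma in_KG0 : in_KG (0 : P).
Proof. by exists [::]; rewrite big_nil. Qed.

Lemma in_KGD (p q : P) : in_KG p -> in_KG q -> in_KG (p + q).
Proof.
move=> [s [s_gen ->]] [t [t_gen ->]]; exists (s ++ t); rewrite big_cat.
by split=> // c; rewrite mem_cat => /orP[/s_gen | /t_gen].
Qed.

Lemma in_KGMl (r p : P) : in_KG p -> in_KG (r * p).
Proof.
move=> [s [s_gen ->]]; exists [seq (r * c.1, c.2) | c <- s]; split.
  by move=> _ /mapP[c /s_gen ? ->].
by rewrite big_map mulr_sumr; apply: eq_bigr => c _; rewrite mulrA.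
Qed.

Lemma in_KG_gen (g : P) : KG_gen g -> in_KG g.
Proof.
move=> gen_g; exists [:: (1, g)]; rewrite big_seq1 mul1r.
by split=> // c; rewrite mem_seq1 => /eqP ->.
Qed.

Lemma in_KGZ a (p : P) : in_KG p -> in_KG (a *: p).
Proof. by rewrite -mul_mpolyC; apply: in_KGMl. Qed.

Lemma in_KG_sum (I : eqType) (r : seq I) (F : I -> P) :
  (forall i, i \in r -> in_KG (F i)) -> in_KG (\sum_(i <- r) F i).
Proof.
by move=> KGF; rewrite big_seq; apply: big_ind => //; [apply: in_KG0 | apply: in_KGD].
Qed.

Lemma in_KG_shift (r a b : 'X_{1..nvars e}) :
  KG_gen ('X_[a] - 'X_[b] : P) -> in_KG ('X_[r + a] - 'X_[r + b] : P).
Proof. by move=> gen_ab; rewrite !mpolyXD -mulrBr; apply/in_KGMl/in_KG_gen. Qed.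

End KGIdeal.

Section DualBasisCriterion.
Variables (K : fieldType) (d : nat) (e : rel 'I_d) (k : nat) (I : finType).
Local Notation P := {mpoly K[nvars e]}.
Variables (b : I -> P) (phi : I -> P -> K).
Hypothesis b_homog : forall i, homog_deg k (b i).
Hypothesis phi_linear : forall j a (p q : P), phi j (a *: p + q) = a * phi j p + phi j q.
Hypothesis phi_KG : forall j p, in_KG p -> phi j p = 0.
Hypothesis phi_b : forall i j, phi j (b i) = (i == j)%:R.
Hypothesis b_span : forall p, homog_deg k p -> in_KG (p - \sum_j phi j p *: b j).

Lemma phi_sum j m (c : 'I_m -> K) (f : 'I_m -> P) :
  phi j (\sum_i c i *: f i) = \sum_i c i * phi j (f i).
Proof.
have phi0 : phi j 0 = 0 by apply: phi_KG; apply: in_KG0.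
have phiD (p q : P) : phi j (p + q) = phi j p + phi j q.
  by rewrite -{1}[p]scale1r phi_linear mul1r.
rewrite (big_morph _ phiD phi0); apply: eq_bigr => i _.
by rewrite -[_ *: _]addr0 phi_linear phi0 addr0.
Qed.

Lemma hilb_fun_eq_dual_basis : hilb_fun_eq K e k #|I|.
Proof.
split.
  exists (b \o enum_val); split=> [i|c KGc i]; first exact: b_homog.
  move/(phi_KG (enum_val i)): KGc; rewrite phi_sum (bigD1 i) //= phi_b eqxx mulr1.
  rewrite big1 ?addr0 // => j neq_ji.
  by rewrite phi_b (inj_eq enum_val_inj) (negbTE neq_ji) mulr0.
move=> f f_homog indep_f.
pose A : 'M_(#|I|.+1, #|I|) := \matrix_(i, j) phi (enum_val j) (f i).
have [v v_neq0 vA0] := nonzero_left_kernel A (ltnSn _).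
have v_rel j : \sum_i v 0 i * phi j (f i) = 0.
  have /rowP/(_ (enum_rank j)) := vA0.
  by rewrite !mxE; under eq_bigr do rewrite mxE enum_rankK.
suff KGv : in_KG (\sum_i v 0 i *: f i).
  by case/eqP: v_neq0; apply/rowP => i; rewrite mxE (indep_f _ KGv).
have -> : \sum_i v 0 i *: f i =
    \sum_i v 0 i *: (f i - \sum_j phi j (f i) *: b j)
    + \sum_j (\sum_i v 0 i * phi j (f i)) *: b j.
  under [X in _ + X]eq_bigr do rewrite scaler_suml.
  rewrite [X in _ + X]exchange_big -big_split /=; apply: eq_bigr => i _.
  by under [X in _ + X]eq_bigr do rewrite -scalerA; rewrite -scaler_sumr -scalerDr subrK.
rewrite [X in _ + X]big1 ?addr0 => [|j _]; last by rewrite v_rel scale0r.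
by apply: in_KG_sum => i _; apply/in_KGZ/b_span.
Qed.

End DualBasisCriterion.

Section StandardMonomials.
Variables (K : fieldType) (d : nat) (e : rel 'I_d).
Hypothesis e_irr : irreflexive e.
Local Notation n := (nvars e).
Local Notation P := {mpoly K[n]}.

Definition vset (i : 'I_n) : {set 'I_d} := val (enum_val i : stab e).

Lemma vset_inj : injective vset.
Proof. by move=> i j /val_inj /enum_val_inj. Qed.

Lemma stableb_set0 : stableb e set0.
Proof. by apply/forallP => x; rewrite inE. Qed.

Lemma stableb_set1 x : stableb e [set x].
Proof.
by apply/forall_inP => y /set1P ->; apply/forall_inP => z /set1P ->; rewrite e_irr.
Qed.

Lemma stableb_sub (S T : {set 'I_d}) : T \subset S -> stableb e S -> stableb e T.
Proof.
move=> sTS /forall_inP stS; apply/forall_inP => x Tx.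
have /forall_inP stSx := stS x (subsetP sTS x Tx).
by apply/forall_inP => y Ty; apply: stSx; apply: (subsetP sTS).
Qed.

Definition var_of (S : {set 'I_d}) (stS : stableb e S) : 'I_n :=
  enum_rank (Sub S stS : stab e).

Lemma vset_var_of S stS : vset (@var_of S stS) = S.
Proof. by rewrite /vset /var_of enum_rankK. Qed.

Definition var0 : 'I_n := var_of stableb_set0.
Definition var1 x : 'I_n := var_of (stableb_set1 x).
Definition var_del i x : 'I_n :=
  var_of (stableb_sub (subsetDl (vset i) [set x]) (valP (enum_val i))).

Lemma vset0 : vset var0 = set0. Proof. exact: vset_var_of. Qed.
Lemma vset1 x : vset (var1 x) = [set x]. Proof. exact: vset_var_of. Qed.
Lemma vset_del i x : vset (var_del i x) = vset i :\ x. Proof. exact: vset_var_of. Qed.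

Lemma vset_neq0 i : i != var0 -> vset i != set0.
Proof. by apply: contraNneq; rewrite -vset0 => /vset_inj ->. Qed.

Lemma neq_var0 j : (0 < #|vset j|)%N -> (j == var0) = false.
Proof. by apply: contraTF => /eqP ->; rewrite vset0 cards0. Qed.

Definition cover (m : 'X_{1..n}) (x : 'I_d) : nat := (\sum_(i | x \in vset i) m i)%N.

Lemma cover0 x : cover 0%MM x = 0%N.
Proof. by rewrite /cover big1 // => i _; rewrite mnm0E. Qed.

Lemma coverD m1 m2 x : cover (m1 + m2)%MM x = (cover m1 x + cover m2 x)%N.
Proof. by rewrite /cover -big_split; apply: eq_bigr => i _; rewrite mnmDE. Qed.

Lemma cover_sum (J : Type) (r : seq J) (Q : pred J) (F : J -> 'X_{1..n}) x :
  cover (\sum_(j <- r | Q j) F j)%MM x = (\sum_(j <- r | Q j) cover (F j) x)%N.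
Proof.
elim: r => [|j r IH]; rewrite ?big_nil ?cover0 // !big_cons.
by case: (Q j); rewrite ?coverD IH.
Qed.

Lemma coverMn m c x : cover (m *+ c)%MM x = (cover m x * c)%N.
Proof. by rewrite /cover big_distrl; apply: eq_bigr => i _; rewrite mulmnE. Qed.

Lemma cover1 j x : cover U_(j)%MM x = (x \in vset j).
Proof.
rewrite /cover big_mkcond (bigD1 j) //= mnm1E eqxx big1 ?addn0 => [|i ne_ij].
  by case: (x \in vset j).
by rewrite mnm1E eq_sym (negbTE ne_ij); case: ifP.
Qed.

Lemma sum_cover m : (\sum_x cover m x = \sum_i m i * #|vset i|)%N.
Proof.
rewrite /cover (exchange_big_dep xpredT) //=; apply: eq_bigr => i _.
by rewrite sum_nat_const mulnC.
Qed.

Lemma cover_pos m x : (0 < cover m x)%N -> exists2 i, (0 < m i)%N & x \in vset i.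
Proof.
case: (pickP (fun i => (0 < m i)%N && (x \in vset i))) => [i /andP[]|no_factor].
  by exists i.
rewrite /cover big1 // => i xi; apply/eqP; have := no_factor i.
by rewrite xi andbT lt0n => /negbFE.
Qed.

Definition std_mnm (k : nat) (U : {set 'I_d}) : 'X_{1..n} :=
  (U_(var0) *+ (k - #|U|) + \sum_(x in U) U_(var1 x))%MM.

Lemma cover_std k U x : cover (std_mnm k U) x = (x \in U).
Proof.
rewrite coverD coverMn cover1 vset0 inE mul0n add0n cover_sum.
under eq_bigr do rewrite cover1 vset1 inE.
case xU: (x \in U); last by rewrite big1 // => y yU; case: eqP xU => // ->; rewrite yU.
by rewrite (bigD1 x) //= eqxx big1 // => y /andP[_]; rewrite eq_sym => /negbTE ->.
Qed.

Lemma mdeg_std k U : (d <= k)%N -> mdeg (std_mnm k U) = k.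
Proof.
move=> le_dk; rewrite mdegD mdegMn mdeg1 mul1n mdeg_sum.
under eq_bigr do rewrite mdeg1.
rewrite sum1_card subnK //; apply: leq_trans le_dk.
by rewrite -[X in (_ <= X)%N](card_ord d) max_card.
Qed.

Definition atomic (m : 'X_{1..n}) : Prop := forall i, (1 < #|vset i|)%N -> m i = 0%N.

Lemma std_atomic k U : atomic (std_mnm k U).
Proof.
move=> i vset_i; rewrite mnmDE mulmnE mnm1E mnm_sumE eq_sym neq_var0 ?(ltnW vset_i) //.
rewrite big1 // => x _; rewrite mnm1E.
by apply/eqP; rewrite eqb0; apply: contraTN vset_i => /eqP <-; rewrite vset1 cards1.
Qed.

Lemma cover_atomic m i x : atomic m -> vset i = [set x] -> cover m x = m i.
Proof.
move=> atm vset_i; rewrite /cover (bigD1 i) /= ?vset_i ?set11 //.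
rewrite big1 ?addn0 // => j /andP[xj ne_ji].
apply: atm; rewrite ltnNge; apply: contra ne_ji => le_j1.
by apply/eqP/vset_inj/eqP; rewrite vset_i eq_sym eqEcard sub1set xj cards1.
Qed.

Lemma eq_atomic m m' : atomic m -> atomic m' ->
  cover m =1 cover m' -> mdeg m = mdeg m' -> m = m'.
Proof.
move=> atm atm' eq_cover eq_deg.
have eq_off0 i : i != var0 -> m i = m' i.
  move=> /vset_neq0 vset_i.
  have [lt1i | le_i1] := ltnP 1 #|vset i|; first by rewrite atm // atm'.
  have /cards1P[x vset_ix] : #|vset i| == 1%N by rewrite eqn_leq le_i1 card_gt0.
  by rewrite -(cover_atomic atm vset_ix) -(cover_atomic atm' vset_ix).
apply/mnmP => i; have [->|] := eqVneq i var0; last exact: eq_off0.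
move: eq_deg; rewrite !mdegE (bigD1 var0) //= [in RHS](bigD1 var0) //=.
by rewrite (eq_bigr (fun j => m' j)) => [|j /eq_off0 //]; apply: addIn.
Qed.

Definition exact_cover (k : nat) (U : {set 'I_d}) (m : 'X_{1..n}) : bool :=
  (mdeg m == k) && [forall x, cover m x == (x \in U)].

Lemma exact_cover_std k U V : (d <= k)%N -> exact_cover k V (std_mnm k U) = (U == V).
Proof.
move=> le_dk; rewrite /exact_cover mdeg_std // eqxx /=.
apply/forallP/eqP => [cover_U | <- x]; last by rewrite cover_std.
by apply/setP => x; have := cover_U x; rewrite cover_std; case: (x \in U); case: (x \in V).
Qed.

Lemma exact_coverDr k U m a b : mdeg a = mdeg b -> cover a =1 cover b ->
  exact_cover k U (m + a) = exact_cover k U (m + b).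
Proof.
move=> eq_deg eq_cover; rewrite /exact_cover !mdegD eq_deg; congr (_ && _).
by apply: eq_forallb => x; rewrite !coverD eq_cover.
Qed.

Lemma exact_cover_overlap k U m x : (1 < cover m x)%N -> exact_cover k U m = false.
Proof.
move=> lt1m; apply/negbTE; rewrite negb_and negb_forall; apply/orP; right.
apply/existsP; exists x; rewrite neq_ltn; apply/orP; right.
by case: (x \in U); [exact: lt1m | exact: ltnW lt1m].
Qed.

Lemma exact_cover_set k U m : mdeg m = k -> (forall x, cover m x <= 1)%N ->
  exact_cover k U m = (U == [set x | cover m x == 1%N]).
Proof.
move=> deg_m cover_m; rewrite /exact_cover deg_m eqxx /=.
apply/forallP/eqP => [eq_cover | -> x].
  apply/setP => x; rewrite inE; move: (eq_cover x) (cover_m x).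
  by case: (x \in U); case: (cover m x) => [|[]].
by rewrite inE; move: (cover_m x); case: (cover m x) => [|[]].
Qed.

Definition cover_coef (k : nat) (U : {set 'I_d}) (p : P) : K :=
  \sum_(m : 'X_{1..n < k.+1}) p@_m * (exact_cover k U m)%:R.

Lemma cover_coef_linear k U a (p q : P) :
  cover_coef k U (a *: p + q) = a * cover_coef k U p + cover_coef k U q.
Proof.
rewrite /cover_coef mulr_sumr -big_split; apply: eq_bigr => m _.
by rewrite mcoeffD mcoeffZ mulrDl mulrA.
Qed.

Lemma cover_coef0 k U : cover_coef k U 0 = 0.
Proof. by rewrite /cover_coef big1 // => m _; rewrite mcoeff0 mul0r. Qed.

Lemma cover_coef_sum k U (J : Type) (r : seq J) (F : J -> P) :
  cover_coef k U (\sum_(j <- r) F j) = \sum_(j <- r) cover_coef k U (F j).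
Proof.
have coefD (p q : P) : cover_coef k U (p + q) = cover_coef k U p + cover_coef k U q.
  by rewrite -{1}[p]scale1r cover_coef_linear mul1r.
exact: (big_morph _ coefD (cover_coef0 k U)).
Qed.

Lemma cover_coefX k U m : cover_coef k U 'X_[m] = (exact_cover k U m)%:R.
Proof.
rewrite /cover_coef; have [le_mk | lt_km] := ltnP (mdeg m) k.+1.
  rewrite (bigD1 (BMultinom le_mk)) //= mcoeffX eqxx mul1r big1 ?addr0 // => m' ne_m'm.
  rewrite mcoeffX; case: eqP => [eq_mm'|]; last by rewrite mul0r.
  by case/eqP: ne_m'm; apply: val_inj.
rewrite big1 => [|m' _]; last first.
  rewrite mcoeffX; case: eqP => [eq_mm'|]; last by rewrite mul0r.
  by have := bmdeg m'; rewrite -eq_mm' ltnNge lt_km.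
by rewrite /exact_cover; case: eqP lt_km => // ->; rewrite ltnn.
Qed.

Lemma cover_coefZX k U c m : cover_coef k U (c *: 'X_[m]) = c * (exact_cover k U m)%:R.
Proof. by rewrite -[_ *: _]addr0 cover_coef_linear cover_coefX cover_coef0 addr0. Qed.

Lemma cover_coefE k U (p : P) :
  cover_coef k U p = \sum_(m <- msupp p) p@_m * (exact_cover k U m)%:R.
Proof.
rewrite {1}(mpolyE p) cover_coef_sum; apply: eq_bigr => m _.
by rewrite cover_coefZX.
Qed.

Lemma cover_coefB k U (p q : P) :
  cover_coef k U (p - q) = cover_coef k U p - cover_coef k U q.
Proof. by rewrite -scaleN1r addrC cover_coef_linear mulN1r addrC. Qed.

Lemma cover_coef_mulX k U (r : P) a :
  cover_coef k U (r * 'X_[a]) = \sum_(m <- msupp r) r@_m * (exact_cover k U (m + a))%:R.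
Proof.
rewrite {1}(mpolyE r) mulr_suml cover_coef_sum; apply: eq_bigr => m _.
by rewrite -scalerAl -mpolyXD cover_coefZX.
Qed.

Lemma vset_rank (S : stab e) : vset (enum_rank S) = val S.
Proof. by rewrite /vset enum_rankK. Qed.

Lemma cover_pair (S T : stab e) x :
  cover (U_(enum_rank S) + U_(enum_rank T))%MM x = ((x \in val S) + (x \in val T))%N.
Proof. by rewrite coverD !cover1 !vset_rank. Qed.

Lemma cover_coef_gen k U (r g : P) : KG_gen g -> cover_coef k U (r * g) = 0.
Proof.
case=> [[S1 [S2 [S3 [S4 [dis12 dis34 eqU ->]]]]] | [S [T [meetST ->]]]].
  have cover_disj (A B : {set 'I_d}) x :
      A :&: B = set0 -> ((x \in A) + (x \in B))%N = (x \in A :|: B).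
    by move/setP/(_ x); rewrite !inE; case: (x \in A); case: (x \in B).
  rewrite /xS -!mpolyXD mulrBr cover_coefB !cover_coef_mulX -sumrB big1 // => m _.
  rewrite (@exact_coverDr _ _ _ _ (U_(enum_rank S3) + U_(enum_rank S4))%MM) ?subrr //.
    by rewrite !mdegD !mdeg1.
  by move=> x; rewrite !cover_pair !cover_disj // eqU.
have [x /setIP[xS xT]] := set0Pn _ meetST.
rewrite /xS -mpolyXD cover_coef_mulX big1 // => m _.
rewrite (@exact_cover_overlap _ _ _ x) ?mulr0 //.
by rewrite coverD cover_pair xS xT ltn_addl.
Qed.

Lemma cover_coef_KG k U (p : P) : in_KG p -> cover_coef k U p = 0.
Proof.
case=> s [s_gen ->]; rewrite cover_coef_sum big_seq big1 // => c /s_gen.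
exact: cover_coef_gen.
Qed.

Lemma overlap_in_KG m x : (1 < cover m x)%N -> in_KG ('X_[m] : P).
Proof.
move=> lt1m; have [i mi_pos xi] := cover_pos (ltnW lt1m).
rewrite -(mnm_sub1K mi_pos) in lt1m *.
have [|j mj_pos xj] := @cover_pos (m - U_(i))%MM x.
  by move: lt1m; rewrite coverD cover1 xi addn1 ltnS.
rewrite -(mnm_sub1K mj_pos) -addmA mpolyXD; apply/in_KGMl/in_KG_gen; right.
exists (enum_val j), (enum_val i); rewrite /xS !enum_valK -mpolyXD; split=> //.
by apply/set0Pn; exists x; rewrite inE xi xj.
Qed.

Definition split_mnm (m : 'X_{1..n}) i s : 'X_{1..n} :=
  (m - (U_(i) + U_(var0)) + (U_(var1 s) + U_(var_del i s)))%MM.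

Section SplitStep.
Variables (m : 'X_{1..n}) (i : 'I_n) (s : 'I_d).
Hypotheses (mi_pos : (0 < m i)%N) (m0_pos : (0 < m var0)%N).
Hypotheses (vset_i : (1 < #|vset i|)%N) (si : s \in vset i).

Lemma split_le : (U_(i) + U_(var0) <= m)%MM.
Proof.
apply/mnm_lepP => l; rewrite mnmDE !mnm1E.
have [<-|ne_il] := eqVneq i l; first by rewrite eq_sym neq_var0 ?(ltnW vset_i).
by case: eqP => // <-.
Qed.

Lemma split_binomial :
  KG_gen ('X_[U_(i) + U_(var0)] - 'X_[U_(var1 s) + U_(var_del i s)] : P).
Proof.
left; exists (enum_val i), (enum_val var0), (enum_val (var1 s)), (enum_val (var_del i s)).
rewrite /xS !enum_valK !mpolyXD -![val (enum_val _)]/(vset _) vset0 vset1 vset_del.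
rewrite setI0 setU0 setD1K //; split=> //.
by apply/setP => y; rewrite !inE; case: eqP.
Qed.

Lemma in_KG_split : in_KG ('X_[m] - 'X_[split_mnm m i s] : P).
Proof. by rewrite -{1}(submK split_le); apply/in_KG_shift/split_binomial. Qed.

Lemma cover_split : cover (split_mnm m i s) =1 cover m.
Proof.
move=> x; rewrite -[in RHS](submK split_le) !coverD !cover1 vset0 vset1 vset_del !inE.
by congr (_ + _)%N; case: (eqVneq x s) => [->|]; rewrite ?si //= addn0.
Qed.

Lemma mdeg_split : mdeg (split_mnm m i s) = mdeg m.
Proof. by rewrite -[in RHS](submK split_le) !mdegD !mdeg1. Qed.

Lemma split_var0 : (split_mnm m i s var0 < m var0)%N.
Proof.
have vset_del_pos : (0 < #|vset (var_del i s)|)%N.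
  by move: vset_i; rewrite vset_del (cardsD1 s) si add1n ltnS.
rewrite !mnmDE mnmBE mnmDE !mnm1E eqxx !neq_var0 ?vset1 ?cards1 ?(ltnW vset_i) //.
by rewrite addn0 add0n subn1 ltn_predL.
Qed.

End SplitStep.

Lemma empty_factor_pos k m i :
    (d <= k)%N -> mdeg m = k -> (forall x, cover m x <= 1)%N ->
  (0 < m i)%N -> (1 < #|vset i|)%N -> (0 < m var0)%N.
Proof.
move=> le_dk deg_m cover_m mi_pos vset_i; rewrite lt0n; apply/negP => /eqP m0.
have le_cover_d : (\sum_l m l * #|vset l| <= d)%N.
  by rewrite -sum_cover -[X in (_ <= X)%N]card_ord -sum1_card leq_sum.
have lt_deg : (\sum_l m l < \sum_l m l * #|vset l|)%N.
  rewrite (bigD1 i) // [X in (_ < X)%N](bigD1 i) //= -addSn leq_add ?ltn_Pmulr //.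
  apply: leq_sum => l _; have [->|/vset_neq0] := eqVneq l var0; first by rewrite m0.
  by rewrite -card_gt0 => /leq_pmulr.
by move: (leq_trans lt_deg le_cover_d); rewrite -mdegE deg_m ltnNge le_dk.
Qed.

Lemma std_reduction k m : (d <= k)%N -> mdeg m = k -> (forall x, cover m x <= 1)%N ->
  in_KG ('X_[m] - 'X_[std_mnm k [set x | cover m x == 1%N]] : P).
Proof.
move=> le_dk; have [N] := ubnP (m var0); elim: N m => // N IH m lt_m0N deg_m cover_m.
case: (pickP (fun i => (0 < m i)%N && (1 < #|vset i|)%N)) => [i /andP[mi_pos vset_i]|atm].
  have m0_pos := empty_factor_pos le_dk deg_m cover_m mi_pos vset_i.
  have [s si] : exists s, s \in vset i by apply/set0Pn; rewrite -card_gt0 ltnW.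
  have cover_m' := cover_split mi_pos m0_pos vset_i si.
  have -> : [set x | cover m x == 1%N] = [set x | cover (split_mnm m i s) x == 1%N].
    by apply/setP => x; rewrite !inE cover_m'.
  rewrite -[X in X - _](subrK 'X_[split_mnm m i s]) -addrA.
  apply: in_KGD; first exact: in_KG_split.
  apply: IH => [|| x]; last by rewrite cover_m'.
    by apply: leq_trans (split_var0 m0_pos vset_i si) _; rewrite -ltnS.
  by rewrite mdeg_split.
suff <- : m = std_mnm k [set x | cover m x == 1%N] by rewrite subrr; apply: in_KG0.
apply: eq_atomic (std_atomic _ _) _ _; last by rewrite mdeg_std.
  by move=> l vset_l; have := atm l; rewrite vset_l andbT lt0n => /negbFE/eqP.
by move=> x; rewrite cover_std inE; have := cover_m x; case: (cover m x) => [|[|]].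
Qed.

Lemma mnm_std_span k m : (d <= k)%N -> mdeg m = k ->
  in_KG ('X_[m] - \sum_U (exact_cover k U m)%:R *: 'X_[std_mnm k U] : P).
Proof.
move=> le_dk deg_m; case: (pickP (fun x => 1 < cover m x)%N) => [x lt1m | le_cover1].
  rewrite big1 ?subr0 => [|U _]; first exact: overlap_in_KG lt1m.
  by rewrite (exact_cover_overlap _ _ lt1m) scale0r.
have cover_m x : (cover m x <= 1)%N by rewrite leqNgt le_cover1.
under eq_bigr do rewrite exact_cover_set //.
rewrite (bigD1 [set x | cover m x == 1%N]) //= eqxx scale1r big1 ?addr0 => [|U /negbTE ->].
  exact: std_reduction.
exact: scale0r.
Qed.

Lemma homog_std_span k (p : P) : (d <= k)%N -> homog_deg k p ->
  in_KG (p - \sum_U cover_coef k U p *: 'X_[std_mnm k U]).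
Proof.
move=> le_dk /allP homog_p.
have -> : p - \sum_U cover_coef k U p *: 'X_[std_mnm k U] =
    \sum_(m <- msupp p) p@_m *: ('X_[m] - \sum_U (exact_cover k U m)%:R *: 'X_[std_mnm k U]).
  under [in RHS]eq_bigr do rewrite scalerBr scaler_sumr.
  rewrite sumrB -mpolyE exchange_big /=; congr (_ - _); apply: eq_bigr => U _.
  by rewrite cover_coefE scaler_suml; apply: eq_bigr => m _; rewrite scalerA.
apply: in_KG_sum => m supp_m; apply/in_KGZ/mnm_std_span => //.
exact/eqP/homog_p.
Qed.

End StandardMonomials.

Theorem proposition6p11 (K : fieldType) (d : nat) (e : rel 'I_d) :
  simple_graph e ->
  exists k0 : nat, forall k : nat, (k0 <= k)%N -> hilb_fun_eq K e k (2 ^ d).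
Proof.
move=> [_ e_irr]; exists d => k le_dk.
rewrite -[d in (2 ^ d)%N]card_ord -card_set_type.
apply: (hilb_fun_eq_dual_basis (b := fun U => 'X_[std_mnm e_irr k U])
                               (phi := cover_coef k)).
- by move=> U; rewrite /homog_deg msuppX /= mdeg_std ?eqxx.
- exact: cover_coef_linear.
- exact: cover_coef_KG.
- by move=> U V; rewrite cover_coefX exact_cover_std.
- by move=> p; apply: homog_std_span.
Qed.
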